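(* If $n\ge4$ and $h$ is even with $h\ge\frac{2(n-1)}{n-3}$, then there exists $p\in\mathcal P$ such that $D_{\mu(p)}(p)=D_{\mu(p^r)}(p^r)=\{n\}$.
   Context: Let $n,h\ge2$ be integers, $N=\{1,\dots,n\}$, $H=\{1,\dots,h\}$. $\mathcal P$ is the set of $h$-tuples $p=(p_1,\dots,p_h)$ of linear orders on $N$; $p^r$ is obtained by reversing each $p_i$; $x>_{p_i}y$ means $x\ne y$ and $p_i$ ranks $x$ above $y$. For an integer $\mu$ with $h/2<\mu\le h$, $D_\mu(p)=\{x\in N: \forall y\in N,\ |\{i: y>_{p_i}x\}|<\mu\}$, and $\mu(p)=\min\{\mu\in\mathbb N\cap(h/2,h]: D_\mu(p)\neq\varnothing\}$. *)

From mathcomp Require Import all_boot.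
Set Implicit Arguments. Unset Strict Implicit. Unset Printing Implicit Defensive.

(* Voters H = {1..h} are 'I_h, alternatives N = {1..n} are 'I_n
   (alternative k in the paper is the ordinal with value k-1).
   A linear order p_i is given by its strict part: r x y  <->  x >_{p_i} y. *)

Definition is_linear_order (n : nat) (r : rel 'I_n) : Prop :=
  irreflexive r /\ transitive r /\ (forall x y : 'I_n, x != y -> r x y || r y x).

Definition profile (n h : nat) := 'I_h -> rel 'I_n.

Definition is_profile (n h : nat) (p : profile n h) : Prop :=
  forall i, is_linear_order (p i).

Definition rev_profile (n h : nat) (p : profile n h) : profile n h :=
  fun i x y => p i y x.

Definition inD (n h : nat) (mu : nat) (p : profile n h) (x : 'I_n) : bool :=
  [forall y : 'I_n, #|[set i : 'I_h | p i y x]| < mu].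

Definition D_nonempty (n h : nat) (mu : nat) (p : profile n h) : bool :=
  [exists x : 'I_n, inD mu p x].

(* mu(p) = min { mu in N : h/2 < mu <= h, D_mu(p) <> empty }
   (the list is increasing, so its head is the minimum; the default h is
   never used for genuine profiles with h >= 1, since D_h(p) is nonempty). *)
Definition mu_of (n h : nat) (p : profile n h) : nat :=
  head h [seq m <- iota 0 h.+1 | (h < m.*2) && D_nonempty m p].

From mathcomp Require Import all_boot zify.

(* Take h = 2k voters. Alternative n is ranked first by k voters and last by
   the other k; the remaining n-1 alternatives are ranked in a cyclic order,
   rotated by one position after every k-1 voters.  The bound on h says that
   the 2k voters use only the n-1 rotations 0, ..., n-2, so each of the cyclic
   alternatives is ranked lowest among them by at most k-1 voters.  Hence every
   x <> n is beaten by its cyclic successor in at least k+1 orders of p (and by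
   its cyclic predecessor in p^r), whereas n is beaten by any y in at most k
   orders of p and of p^r.  So D_(k+1) = {n} for both profiles, and k+1 is the
   least quota above h/2. *)

Lemma leq_card_in_nat (T : finType) (A : {pred T}) (f : T -> nat) b :
  {in A &, injective f} -> {in A, forall x, f x < b} -> #|A| <= b.
Proof.
move=> f_inj f_lt; rewrite cardE -(size_map f) -(size_iota 0 b).
apply: uniq_leq_size.
  by rewrite map_inj_in_uniq ?enum_uniq // => x y; rewrite !mem_enum; apply: f_inj.
by move=> y /mapP[x]; rewrite mem_enum => Ax ->; rewrite mem_iota f_lt.
Qed.

Lemma ltn_ord_max n (x : 'I_n.+1) : (x < n) = (x != ord_max).
Proof. by rewrite -val_eqE /= ltn_neqAle -ltnS ltn_ord andbT. Qed.

Lemma inD_singleton n h mu (p : profile n h) w :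
  inD mu p w -> (forall x, x != w -> exists y, mu <= #|[set i | p i y x]|) ->
  forall x, inD mu p x = (x == w).
Proof.
move=> Dw beaten x; case: eqP => [-> // | /eqP xw].
have [y mu_le] := beaten x xw.
by apply/negbTE/forallPn; exists y; rewrite -leqNgt.
Qed.

Lemma mu_of_half n h (p : profile n h) :
  0 < h -> D_nonempty (h./2).+1 p -> mu_of p = (h./2).+1.
Proof.
move=> h_gt0 D_half; rewrite /mu_of.
have split_h : h.+1 = (h./2).+1 + (h - h./2).-1.+1.
  by have := odd_double_half h; lia.
rewrite [in iota _ _]split_h iotaD filter_cat add0n /= D_half -ltn_half_double ltnSn.
rewrite (@eq_in_filter _ _ pred0) ?filter_pred0 // => m.
by rewrite mem_iota add1n ltnS => /andP[_ m_le]; rewrite ltnNge -geq_half_double m_le.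
Qed.

Section CyclicProfile.

Variables m k : nat.
Hypothesis k_gt1 : 1 < k.
Hypothesis voters_fit : k.*2 <= m * k.-1.

Definition rot (i : nat) : nat := i %/ k.-1.

(* [(x - rot i) mod m], written without [%%] so that [lia] can reason about it *)
Definition cyc_pos (i x : nat) : nat :=
  if rot i <= x then x - rot i else x + m - rot i.

Definition rank (i x : nat) : nat :=
  if x == m then (if i < k then m.+1 else 0) else (cyc_pos i x).+1.

Definition cyclic_profile : profile m.+1 k.*2 :=
  fun i x y => rank i y < rank i x.

Definition cyc_succ (u : nat) : nat := if u.+1 < m then u.+1 else 0.

Lemma rot_lt (i : 'I_k.*2) : rot i < m.
Proof. by rewrite /rot ltn_divLR; have := ltn_ord i; lia. Qed.

Lemma cyc_pos_lt (i : 'I_k.*2) (x : nat) : x < m -> cyc_pos i x < m.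
Proof. by have := rot_lt i; rewrite /cyc_pos; case: ifP; lia. Qed.

Lemma rank_inj (i : 'I_k.*2) : injective (fun x : 'I_m.+1 => rank i x).
Proof.
move=> x y /= eq_rank; apply: ord_inj.
move: eq_rank (rot_lt i) (ltn_ord x) (ltn_ord y); rewrite /rank /cyc_pos.
by move: (rot i) => r; repeat case: ifP; lia.
Qed.

Lemma cyclic_profile_is_profile : is_profile cyclic_profile.
Proof.
move=> i; split; first by move=> x; rewrite /cyclic_profile ltnn.
split; first by move=> y x z xy yz; apply: ltn_trans yz xy.
move=> x y; apply: contraNT; rewrite negb_or -!leqNgt => /andP[yx xy].
by apply/eqP/(@rank_inj i)/eqP; rewrite eqn_leq xy yx.
Qed.

Lemma rank_lt_succ (i u : nat) : u < m -> rot i < m -> cyc_succ u != rot i ->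
  rank i u < rank i (cyc_succ u).
Proof.
rewrite /rank /cyc_pos /cyc_succ; move: (rot i) => r.
by repeat case: ifP; lia.
Qed.

Lemma cyc_succ_onto x : x < m -> exists2 u, u < m & cyc_succ u = x.
Proof.
move=> x_lt; exists (if x == 0 then m.-1 else x.-1); rewrite /cyc_succ;
  by repeat case: ifP; lia.
Qed.

Lemma card_rot_le (s : nat) : #|[set i : 'I_k.*2 | rot i == s]| <= k.-1.
Proof.
apply: (@leq_card_in_nat _ _ (fun i : 'I_k.*2 => i %% k.-1)) => [i j|i _].
  rewrite !inE => /eqP rot_i /eqP rot_j eq_mod; apply: val_inj.
  rewrite /= (divn_eq i k.-1) (divn_eq j k.-1) -/(rot i) -/(rot j).
  by rewrite rot_i rot_j eq_mod.
by rewrite ltn_pmod //; lia.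
Qed.

Lemma succ_majority (u : 'I_m.+1) : u < m ->
  k < #|[set i | cyclic_profile i (inord (cyc_succ u)) u]|.
Proof.
move=> u_lt.
have succ_le : cyc_succ u <= m by rewrite /cyc_succ; case: ifP; lia.
have : ~: [set i : 'I_k.*2 | rot i == cyc_succ u] \subset
       [set i | cyclic_profile i (inord (cyc_succ u)) u].
  apply/subsetP => i; rewrite !inE /cyclic_profile inordK // => rot_ne.
  by rewrite rank_lt_succ ?rot_lt // eq_sym.
move/subset_leq_card; have := cardsC [set i : 'I_k.*2 | rot i == cyc_succ u].
by rewrite card_ord; have := card_rot_le (cyc_succ u); lia.
Qed.

Lemma rank_winner_top (i : 'I_k.*2) (x : 'I_m.+1) :
  i < k -> rank i x <= rank i (@ord_max m).
Proof.
rewrite /rank eqxx => -> /=; case: eqP => // /eqP x_ne.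
by rewrite ltnS ltnW // cyc_pos_lt //; have := ltn_ord x; lia.
Qed.

Lemma rank_winner_bottom (i : 'I_k.*2) (x : 'I_m.+1) :
  k <= i -> rank i (@ord_max m) <= rank i x.
Proof. by rewrite /rank eqxx leqNgt => /negbTE ->. Qed.

Lemma beats_winner_card (y : 'I_m.+1) :
  #|[set i | cyclic_profile i y ord_max]| <= k.
Proof.
have upper i : i \in [set i | cyclic_profile i y ord_max] -> k <= i.
  rewrite inE /cyclic_profile; apply: contraTT; rewrite -ltnNge -leqNgt.
  exact: rank_winner_top.
apply: (@leq_card_in_nat _ _ (fun i : 'I_k.*2 => i - k)) => [i j|i /upper ?].
  by move=> /upper ? /upper ? /= eq_ij; apply: ord_inj; lia.
by have := ltn_ord i; lia.
Qed.

Lemma winner_beats_card (y : 'I_m.+1) :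
  #|[set i | cyclic_profile i ord_max y]| <= k.
Proof.
have lower i : i \in [set i | cyclic_profile i ord_max y] -> i < k.
  rewrite inE /cyclic_profile; apply: contraTT; rewrite -!leqNgt.
  exact: rank_winner_bottom.
by apply: (@leq_card_in_nat _ _ val) => [i j _ _|i /lower]; first exact: val_inj.
Qed.

Lemma inD_cyclic (x : 'I_m.+1) : inD k.+1 cyclic_profile x = (val x == m).
Proof.
have -> : (val x == m) = (x == ord_max) by [].
apply: inD_singleton => [|{}x x_ne].
  by apply/forallP => y; rewrite ltnS beats_winner_card.
have x_lt : x < m by rewrite ltn_ord_max.
by exists (inord (cyc_succ x)); apply: succ_majority.
Qed.

Lemma inD_rev_cyclic (x : 'I_m.+1) :
  inD k.+1 (rev_profile cyclic_profile) x = (val x == m).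
Proof.
have -> : (val x == m) = (x == ord_max) by [].
apply: inD_singleton => [|{}x x_ne].
  by apply/forallP => y; rewrite ltnS winner_beats_card.
have x_lt : x < m by rewrite ltn_ord_max.
have [u u_lt succ_u] := cyc_succ_onto _ x_lt.
have u_le : u < m.+1 by lia.
exists (Ordinal u_le); move: (succ_majority (Ordinal u_le) u_lt) => /=.
by rewrite succ_u inord_val.
Qed.

Lemma mu_of_cyclic : mu_of cyclic_profile = k.+1.
Proof.
rewrite mu_of_half ?doubleK //; first lia.
by apply/existsP; exists ord_max; rewrite inD_cyclic.
Qed.

Lemma mu_of_rev_cyclic : mu_of (rev_profile cyclic_profile) = k.+1.
Proof.
rewrite mu_of_half ?doubleK //; first lia.
by apply/existsP; exists ord_max; rewrite inD_rev_cyclic.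
Qed.

End CyclicProfile.

Theorem proposition9 (n h : nat) :
  4 <= n -> ~~ odd h -> 2 * (n - 1) <= h * (n - 3) ->
  exists p : profile n h,
    is_profile p /\
    (forall x : 'I_n, inD (mu_of p) p x = (val x == n.-1)) /\
    (forall x : 'I_n, inD (mu_of (rev_profile p)) (rev_profile p) x = (val x == n.-1)).
Proof.
case: n => [//|m] n_ge4 h_even fit.
rewrite -(even_halfK h_even) in fit *; move: (h./2) fit => k fit.
have k_gt1 : 1 < k by nia.
have voters_fit : k.*2 <= m * k.-1 by nia.
exists (cyclic_profile m k); split; first exact: cyclic_profile_is_profile.
rewrite mu_of_cyclic // mu_of_rev_cyclic //.
by split; [exact: inD_cyclic | exact: inD_rev_cyclic].
Qed.
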